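(* Let $\mathcal Y\subset\mathbb R^d$ be finite with no element a strict convex combination of others, $\kappa>0$, $\gamma_i=(c(y,\xi_i))_{y\in\mathcal Y}$ for $i\in[N]$, and $\Omega_\Delta$ a proper l.s.c. convex function with domain $\Delta^{\mathcal Y}$ whose restriction to the affine hull of $\Delta^{\mathcal Y}$ is Legendre-type. For $q_\otimes=(q_i)_{i\in[N]}\in\Delta_\otimes$ let $\bar{\mathcal S}_{\Omega_\Delta,N}(q_\otimes):=\inf_{s_\otimes\in\bar S_\otimes}\mathcal S_N(s_\otimes,q_\otimes)$. Then $$\bar{\mathcal S}_{\Omega_\Delta,N}(q_\otimes)=\frac1N\sum_{i=1}^N\langle\gamma_i|q_i\rangle+\frac\kappa N\Big[\sum_{i=1}^N\Omega_\Delta(q_i)-N\,\Omega_\Delta\Big(\frac1N\sum_{i=1}^Nq_i\Big)\Big].$$ Moreover, if $\Psi_\Delta$ is a Legendre-type function with $\Omega_\Delta=\Psi_\Delta+\mathbb I_{\Delta^{\mathcal Y}}$, then $\bar{\mathcal S}_{\Omega_\Delta,N}$ coincides on $\Delta_\otimes$ with $$\bar{\mathcal S}_{\Psi_\Delta,N}(q_\otimes):=\frac1N\sum_{i=1}^N\langle\gamma_i|q_i\rangle+\frac\kappa N\Big[\sum_{i=1}^N\Psi_\Delta(q_i)-N\,\Psi_\Delta\Big(\frac1N\sum_{i=1}^Nq_i\Big)\Big],$$ and $\bar{\mathcal S}_{\Psi_\Delta,N}$ is convex if the function $q_\otimes\mapsto\frac1N\sum_i\Psi_\Delta(q_i)-\Psi_\Delta(\frac1N\sum_iq_i)$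 is convex; this latter function is non-negative.
   Context: $\Delta^{\mathcal Y}$ is the probability simplex indexed by $\mathcal Y$, $\Delta_\otimes=(\Delta^{\mathcal Y})^N$, $\bar S_\otimes=\{(s_1,\dots,s_N)\in(\mathbb R^{\mathcal Y})^N:s_1=\dots=s_N\}$, $\mathbb I_A$ is the indicator of $A$. Legendre-type: strictly convex on the interior of the domain and essentially smooth (w.r.t. the affine hull's metric for restrictions). $\mathcal L_{\Omega_\Delta}(s;q)=\Omega_\Delta(q)+\Omega_\Delta^*(s)-\langle s|q\rangle$, and $\mathcal S_N(s_\otimes,q_\otimes)=\frac1N\sum_{i=1}^N\big[\langle\gamma_i|q_i\rangle+\kappa\mathcal L_{\Omega_\Delta}(s_i;q_i)\big]$. *)

From HB Require Import structures.
From mathcomp Require Import all_boot all_order all_algebra.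
From mathcomp Require Import all_classical all_reals all_analysis.
Set Implicit Arguments. Unset Strict Implicit. Unset Printing Implicit Defensive.
Import Order.TTheory GRing.Theory Num.Theory.
Local Open Scope classical_set_scope.
Local Open Scope ring_scope.

Section Defs.
Variables (R : realType) (Y : finType).

Definition vec := Y -> R.
Definition dotp (s q : vec) : R := \sum_(y : Y) s y * q y.
Definition vsub (u v : vec) : vec := fun y => u y - v y.
Definition vnorm (v : vec) : R := Num.sqrt (dotp v v).
Definition vcomb (t : R) (u v : vec) : vec := fun y => t * u y + (1 - t) * v y.

Definition simplex : set vec :=
  [set q | (forall y, 0 <= q y) /\ \sum_(y : Y) q y = 1].

Definition aff_hull (C : set vec) : set vec :=
  [set x | exists (n : nat) (w : 'I_n -> R) (p : 'I_n -> vec),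
     (forall i, C (p i)) /\ \sum_(i < n) w i = 1 /\
     (forall y, x y = \sum_(i < n) w i * p i y)].

Definition edom (f : vec -> \bar R) : set vec := [set q | (f q < +oo)%E].

Definition proper_fun (f : vec -> \bar R) :=
  (forall q, f q != -oo%E) /\ (exists q, (f q < +oo)%E).

Definition convex_fun (f : vec -> \bar R) :=
  forall u v t, 0 < t < 1 ->
    (f (vcomb t u v) <= t%:E * f u + (1 - t)%:E * f v)%E.

Definition lsc_fun (f : vec -> \bar R) :=
  forall q (a : R), (a%:E < f q)%E ->
    exists2 d, 0 < d & forall z, vnorm (vsub z q) < d -> (a%:E < f z)%E.

Definition set_indic (C : set vec) (q : vec) : \bar R :=
  if `[< C q >] then 0%E else +oo%E.

Definition rel_int (A C : set vec) : set vec :=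
  [set x | C x /\ exists2 e, 0 < e &
     forall z, A z -> vnorm (vsub z x) < e -> C z].

(* The restriction of f to the affine set A is of Legendre type:
   proper convex on A, strictly convex on the (relative) interior I of its
   domain, differentiable on I (gradient in the direction space of A), and
   essentially smooth (gradient norm blows up at the relative boundary). *)
Definition legendre_on (A : set vec) (f : vec -> \bar R) :=
  let I := rel_int A (edom f `&` A) in
  [/\ (forall q, A q -> f q != -oo%E) /\ (exists q, A q /\ (f q < +oo)%E),
      (forall u v t, A u -> A v -> 0 < t < 1 ->
         (f (vcomb t u v) <= t%:E * f u + (1 - t)%:E * f v)%E),
      (exists x, I x),
      (forall u v t, I u -> I v -> u <> v -> 0 < t < 1 ->
         (f (vcomb t u v) < t%:E * f u + (1 - t)%:E * f v)%E) &
      exists g : vec -> vec,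
        [/\ (forall x, I x -> exists a b, [/\ A a, A b & g x = vsub a b]),
            (forall x, I x -> forall e, 0 < e -> exists2 d, 0 < d &
               forall z, A z -> vnorm (vsub z x) < d ->
                 `| fine (f z) - fine (f x) - dotp (g x) (vsub z x) |
                   <= e * vnorm (vsub z x)) &
            (forall (u : nat -> vec) x, (forall k, I (u k)) ->
               (forall e, 0 < e -> exists K, forall k, (K <= k)%N ->
                  vnorm (vsub (u k) x) < e) ->
               ~ I x ->
               forall M : R, exists K, forall k, (K <= k)%N ->
                  M < vnorm (g (u k)))]].

Definition fconj (f : vec -> \bar R) (s : vec) : \bar R :=
  ereal_sup [set ((dotp s q)%:E - f q)%E | q in [set: vec]].

Definition fy_loss (f : vec -> \bar R) (s q : vec) : \bar R :=
  (f q + fconj f s - (dotp s q)%:E)%E.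

Section Prod.
Variables (N : nat) (kappa : R) (gam : 'I_N -> vec).

Definition SN (f : vec -> \bar R) (s q : 'I_N -> vec) : \bar R :=
  ((N%:R^-1)%:E * \sum_(i < N)
     ((dotp (gam i) (q i))%:E + kappa%:E * fy_loss f (s i) (q i)))%E.

(* \bar S_otimes : tuples with all components equal *)
Definition diag_set : set ('I_N -> vec) := [set s | forall i j, s i = s j].

Definition Sbar (f : vec -> \bar R) (q : 'I_N -> vec) : \bar R :=
  ereal_inf [set SN f s q | s in diag_set].

Definition vmean (q : 'I_N -> vec) : vec :=
  fun y => N%:R^-1 * \sum_(i < N) q i y.

Definition Sbar_formula (f : vec -> \bar R) (q : 'I_N -> vec) : \bar R :=
  ((N%:R^-1 * \sum_(i < N) dotp (gam i) (q i))%:E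
   + (kappa / N%:R)%:E * (\sum_(i < N) f (q i) - N%:R%:E * f (vmean q)))%E.

Definition Fgap (f : vec -> \bar R) (q : 'I_N -> vec) : \bar R :=
  ((N%:R^-1)%:E * \sum_(i < N) f (q i) - f (vmean q))%E.

Definition prod_simplex : set ('I_N -> vec) := [set q | forall i, simplex (q i)].
Definition prod_dom (f : vec -> \bar R) : set ('I_N -> vec) :=
  [set q | forall i, edom f (q i)].

Definition vcombN (t : R) (q q' : 'I_N -> vec) : 'I_N -> vec :=
  fun i => vcomb t (q i) (q' i).

Definition convex_on (D : set ('I_N -> vec)) (F : ('I_N -> vec) -> \bar R) :=
  forall q q' t, D q -> D q' -> 0 < t < 1 ->
    (F (vcombN t q q') <= t%:E * F q + (1 - t)%:E * F q')%E.
End Prod.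

End Defs.

Definition no_cvx_comb (R : realType) (d : nat) (Y : finType)
  (pt : Y -> 'rV[R]_d) :=
  forall (y : Y) (lam : Y -> R), (forall z, 0 <= lam z) -> lam y = 0 ->
    \sum_(z : Y) lam z = 1 -> pt y <> \sum_(z : Y) lam z *: pt z.

From HB Require Import structures.
From mathcomp Require Import all_boot all_order all_algebra.
From mathcomp Require Import all_classical all_reals all_analysis.
From mathcomp Require Import ring lra.
Set Implicit Arguments. Unset Strict Implicit. Unset Printing Implicit Defensive.
Import Order.TTheory GRing.Theory Num.Theory.
Local Open Scope classical_set_scope.
Local Open Scope ring_scope.

(* For a constant tuple [s_i = s], [S_N(s, q)] is the closed form plus
   [kappa (Omega*(s) - <s, qm> + Omega(qm))], where [qm] is the mean of the [q_i].
   Fenchel-Young makes the bracket nonnegative.  To make it small, take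
   [s = grad Omega(x_t)] at [x_t = t x0 + (1 - t) qm] with [x0] in the relative
   interior of the simplex: this gradient is a subgradient, so
   [Omega*(s) = <s, x_t> - Omega(x_t)], and the subgradient inequality towards [x0]
   together with lower semicontinuity at [qm] bounds the bracket by any [eps > 0]
   for small [t].  On the simplex [Omega = Psi], so the two closed forms agree; the
   closed form for [Psi] is a linear function plus [kappa] times the Jensen gap of
   [Psi], which is nonnegative by Jensen's inequality. *)

Section VectorAlgebra.
Variables (R : realType) (Y : finType).
Implicit Types (t : R) (s u v : vec R Y).

Lemma dotpZr s (a : R) v : dotp s (fun y => a * v y) = a * dotp s v.
Proof. by rewrite /dotp mulr_sumr; apply: eq_bigr => y _; rewrite mulrCA. Qed.

Lemma dotpBr s u v : dotp s (vsub u v) = dotp s u - dotp s v.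
Proof. by rewrite /dotp -sumrB; apply: eq_bigr => y _; rewrite /vsub mulrBr. Qed.

Lemma dotp_vcomb s t u v :
  dotp s (vcomb t u v) = t * dotp s u + (1 - t) * dotp s v.
Proof.
rewrite /dotp !mulr_sumr -big_split; apply: eq_bigr => y _.
by rewrite /vcomb /=; ring.
Qed.

Lemma vnormZ (a : R) v : vnorm (fun y => a * v y) = `|a| * vnorm v.
Proof.
rewrite /vnorm.
have -> : dotp (fun y => a * v y) (fun y => a * v y) = a ^+ 2 * dotp v v.
  by rewrite /dotp mulr_sumr; apply: eq_bigr => y _; ring.
by rewrite sqrtrM ?sqr_ge0 // sqrtr_sqr.
Qed.

Lemma vcomb_subr t u v : vsub (vcomb t u v) v = (fun y => t * vsub u v y).
Proof. by apply/funext => y; rewrite /vsub /vcomb; ring. Qed.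

Lemma vcomb_subl t u v : vsub u (vcomb t u v) = (fun y => (1 - t) * vsub u v y).
Proof. by apply/funext => y; rewrite /vsub /vcomb; ring. Qed.

Lemma vmean1 (q : 'I_1 -> vec R Y) : vmean q = q ord0.
Proof. by apply/funext => y; rewrite /vmean big_ord1 invr1 mul1r. Qed.

Lemma succ_ratio_in01 n : 0 < (n.+1%:R / n.+2%:R : R) < 1.
Proof. by rewrite divr_gt0 ?ltr0n //= ltr_pdivrMr ?ltr0n // mul1r ltr_nat. Qed.

Lemma vmeanS n (q : 'I_n.+2 -> vec R Y) :
  vmean q = vcomb (n.+1%:R / n.+2%:R)
    (vmean (fun i : 'I_n.+1 => q (widen_ord (leqnSn _) i))) (q ord_max).
Proof.
apply/funext => y; rewrite /vmean /vcomb big_ord_recr /= [n.+2%:R]mulrS.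
have : (n.+1%:R : R) != 0 by rewrite pnatr_eq0.
have : (1 + n.+1%:R : R) != 0 by rewrite -mulrS pnatr_eq0.
by move: (n.+1%:R : R) => m m1 m0; field; rewrite m1 m0.
Qed.

End VectorAlgebra.

Lemma small_factor (R : realFieldType) (a d : R) : 0 < d ->
  exists2 t0, 0 < t0 & forall t, 0 <= t <= t0 -> t * a < d.
Proof.
move=> d0; have a1 : 0 < `|a| + 1 by rewrite ltr_wpDl.
exists (d / (`|a| + 1)); first by rewrite divr_gt0.
move=> t /andP[t0 tle].
apply: (le_lt_trans (y := t * `|a|)); first by rewrite ler_wpM2l // ler_norm.
apply: (le_lt_trans (y := d / (`|a| + 1) * `|a|)); first by rewrite ler_wpM2r.
by rewrite mulrAC ltr_pdivrMr //; nra.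
Qed.

Section Simplex.
Variables (R : realType) (Y : finType).
Local Notation Delta := (@simplex R Y).
Local Notation A := (aff_hull Delta).
Implicit Types (t : R) (u v x : vec R Y).

Lemma aff_hull_simplexP x : A x <-> \sum_y x y = 1.
Proof.
split.
  move=> [n [w [p [Dp [w1 xE]]]]].
  under eq_bigr do rewrite xE.
  rewrite exchange_big /= -w1; apply: eq_bigr => i _.
  by rewrite -mulr_sumr (proj2 (Dp i)) mulr1.
move=> x1; exists #|Y|, (fun i => x (enum_val i)),
  (fun i y => (enum_val i == y)%:R); split; [|split].
- move=> i; split; first by move=> y; rewrite ler0n.
  rewrite (bigD1 (enum_val i)) //= eqxx big1 ?addr0 // => y /negbTE.
  by rewrite eq_sym => ->.
- by rewrite -x1 [RHS](big_enum_val (A := predT)).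
- move=> y; rewrite -[RHS](big_enum_val (A := predT) (fun z => x z * (z == y)%:R)) /=.
  rewrite (bigD1 y) //= eqxx mulr1 big1 ?addr0 // => z /negbTE ->.
  by rewrite mulr0.
Qed.

Lemma simplex_aff_hull x : Delta x -> A x.
Proof. by move=> [_ x1]; apply/aff_hull_simplexP. Qed.

Lemma simplex_vcomb t u v : 0 <= t <= 1 -> Delta u -> Delta v ->
  Delta (vcomb t u v).
Proof.
move=> /andP[t0 t1] [u0 u1] [v0 v1]; split.
  by move=> y; rewrite /vcomb addr_ge0 // mulr_ge0 // subr_ge0.
rewrite /vcomb big_split /= -!mulr_sumr u1 v1; lra.
Qed.

(* [z] is the image of a point [z'] of the ball around [x0] under the homothety
   of centre [q] and ratio [t]. *)
Lemma rel_int_simplex_vcomb x0 q t :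
  rel_int A (Delta `&` A) x0 -> Delta q -> 0 < t <= 1 ->
  rel_int A (Delta `&` A) (vcomb t x0 q).
Proof.
move=> [[Dx0 _] [e e0 ball_x0]] Dq /andP[t0 t1].
have tN0 : t != 0 by rewrite gt_eqF.
have t01 : 0 <= t <= 1 by rewrite (ltW t0) t1.
have Dxt : Delta (vcomb t x0 q) by exact: simplex_vcomb.
split; first by split => //; exact: simplex_aff_hull.
exists (t * e) => [|z Az zxt]; first by rewrite mulr_gt0.
set z' := fun y => t^-1 * (z y - (1 - t) * q y).
have Az' : A z'.
  apply/aff_hull_simplexP; move/aff_hull_simplexP: Az => z1.
  by rewrite /z' -mulr_sumr sumrB -mulr_sumr z1 (proj2 Dq); field.
have z'x0 : vsub z' x0 = (fun y => t^-1 * vsub z (vcomb t x0 q) y).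
  by apply/funext => y; rewrite /vsub /z' /vcomb; field.
have [Dz' _] : (Delta `&` A) z'.
  apply: ball_x0 => //; rewrite z'x0 vnormZ ger0_norm ?invr_ge0 ?ltW //.
  by rewrite mulrC -ltr_pdivlMr ?invr_gt0 // invrK mulrC.
have -> : z = vcomb t z' q.
  by apply/funext => y; rewrite /vcomb /z'; field.
have Dv : Delta (vcomb t z' q) by exact: simplex_vcomb.
by split => //; exact: simplex_aff_hull.
Qed.

End Simplex.

Section Mean.
Variables (R : realType) (Y : finType) (C : set (vec R Y)) (f : vec R Y -> R).
Hypothesis C_vcomb : forall t u v, 0 < t < 1 -> C u -> C v -> C (vcomb t u v).

Lemma vmean_in n (q : 'I_n -> vec R Y) : (0 < n)%N -> (forall i, C (q i)) ->
  C (vmean q).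
Proof.
case: n q => // n q _; elim: n q => [|n IH] q Cq; first by rewrite vmean1.
by rewrite vmeanS; apply: C_vcomb (succ_ratio_in01 R n) (IH _ (fun i => Cq _)) (Cq _).
Qed.

Hypothesis f_convex : forall t u v, 0 < t < 1 -> C u -> C v ->
  f (vcomb t u v) <= t * f u + (1 - t) * f v.

Lemma jensen_vmean n (q : 'I_n -> vec R Y) : (0 < n)%N -> (forall i, C (q i)) ->
  f (vmean q) <= n%:R^-1 * \sum_i f (q i).
Proof.
case: n q => // n q _; elim: n q => [|n IH] q Cq.
  by rewrite vmean1 big_ord1 invr1 mul1r.
set qw := fun i : 'I_n.+1 => q (widen_ord (leqnSn _) i).
have Cqw i : C (qw i) by exact: Cq.
rewrite vmeanS big_ord_recr /= -/qw.
apply: le_trans (f_convex (succ_ratio_in01 R n) (vmean_in (ltn0Sn n) Cqw) (Cq _)) _.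
have := IH qw Cqw; rewrite [n.+2%:R]mulrS.
have : (0 : R) < n.+1%:R by rewrite ltr0n.
move: (n.+1%:R : R) (\sum_i f (qw i)) => m S m0 IHm.
have -> : (1 + m)^-1 * (S + f (q ord_max))
  = m / (1 + m) * (m^-1 * S) + (1 - m / (1 + m)) * f (q ord_max).
  by field; rewrite !gt_eqF // ltr_wpDl // ltW.
by rewrite lerD2r ler_wpM2l // divr_ge0 // ?addr_ge0 // ltW.
Qed.

End Mean.

Lemma vmean_simplex (R : realType) (Y : finType) N (q : 'I_N -> vec R Y) :
  (0 < N)%N -> prod_simplex q -> simplex (vmean q).
Proof.
move=> N0 Dq; apply: vmean_in N0 Dq => t u v /andP[t0 t1].
by apply: simplex_vcomb; rewrite ltW // ltW.
Qed.

Definition is_rel_grad (R : realType) (Y : finType) (A : set (vec R Y))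
    (f : vec R Y -> \bar R) (x g : vec R Y) :=
  forall e, 0 < e -> exists2 d, 0 < d &
    forall z, A z -> vnorm (vsub z x) < d ->
      `| fine (f z) - fine (f x) - dotp g (vsub z x) | <= e * vnorm (vsub z x).

Section SimplexSupported.
Variables (R : realType) (Y : finType) (Om : vec R Y -> \bar R).
Local Notation Delta := (@simplex R Y).
Local Notation A := (aff_hull Delta).
Local Notation om x := (fine (Om x)).
Hypotheses (Om_proper : proper_fun Om) (Om_dom : edom Om = Delta).
Implicit Types (s x z : vec R Y).

Lemma Om_fin x : Delta x -> Om x = (om x)%:E.
Proof.
rewrite -Om_dom /edom /= => x_fin.
by rewrite fineK // fin_numE (proj1 Om_proper x) lt_eqF.
Qed.

Lemma Om_out x : ~ Delta x -> Om x = +oo%E.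
Proof. by rewrite -Om_dom /edom /= ltey => /negP; rewrite negbK => /eqP. Qed.

Lemma fenchel_young s x : Delta x -> ((dotp s x - om x)%:E <= fconj Om s)%E.
Proof. by move=> Dx; apply: ereal_sup_ubound; exists x; rewrite // Om_fin. Qed.

Lemma fconj_subgrad s x : Delta x ->
  (forall z, Delta z -> dotp s (vsub z x) <= om z - om x) ->
  fconj Om s = (dotp s x - om x)%:E.
Proof.
move=> Dx subgrad; apply/eqP; rewrite eq_le fenchel_young // andbT.
apply: ge_ereal_sup => _ [z _ <-].
have [Dz|Dz] := pselect (Delta z); last by rewrite Om_out //= leNye.
by rewrite Om_fin // -EFinB lee_fin; have := subgrad z Dz; rewrite dotpBr; lra.
Qed.

Hypothesis Om_convex : convex_fun Om.

(* By convexity the derivative towards [z] is at most the difference quotient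
   [om z - om x]. *)
Lemma rel_grad_subgrad s x z : Delta x -> Delta z -> is_rel_grad A Om x s ->
  dotp s (vsub z x) <= om z - om x.
Proof.
move=> Dx Dz grad_s; set n := vnorm (vsub z x).
have n0 : 0 <= n := sqrtr_ge0 _.
suff approx e : 0 < e -> dotp s (vsub z x) <= om z - om x + e * n.
  apply/ler_addgt0Pr => e e0; have n1 : 0 < n + 1 by rewrite ltr_wpDl.
  apply: le_trans (approx (e / (n + 1)) _) _; first by rewrite divr_gt0.
  by rewrite lerD2l mulrAC ler_pdivrMr //; lra.
move=> e0; have [d d0 near_x] := grad_s e e0.
have [t0 t00 small] := small_factor n d0.
set t := Num.min (1/2) t0.
have t_gt0 : 0 < t by rewrite lt_min t00 andbT.
have t_lt1 : t < 1 by rewrite gt_min; apply/orP; left; lra.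
have t_le0 : t <= t0 by rewrite ge_min lexx orbT.
set w := vcomb t z x.
have Dw : Delta w by apply: simplex_vcomb; rewrite ?ltW.
have nw : vnorm (vsub w x) = t * n by rewrite vcomb_subr vnormZ ger0_norm ?ltW.
have close : vnorm (vsub w x) < d by rewrite nw small // (ltW t_gt0) t_le0.
have := near_x w (simplex_aff_hull Dw) close.
rewrite nw vcomb_subr dotpZr ler_norml => /andP[lower _].
have t01 : 0 < t < 1 by rewrite t_gt0 t_lt1.
have := Om_convex z x t01.
rewrite (Om_fin Dw) (Om_fin Dz) (Om_fin Dx) -!EFinM -EFinD lee_fin => cvx.
rewrite -(ler_pM2l t_gt0); lra.
Qed.

Hypotheses (Om_lsc : lsc_fun Om) (Om_legendre : legendre_on A Om).

Lemma fconj_near_tight q e : Delta q -> 0 < e ->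
  exists s, (fconj Om s <= (dotp s q - om q + e)%:E)%E.
Proof.
move=> Dq e0; case: Om_legendre => _ _ [x0 Ix0] _ [g [_ g_grad _]].
rewrite Om_dom in Ix0 g_grad; have [[Dx0 _] _] := Ix0.
have e4 : 0 < e / 4 by rewrite divr_gt0.
have [dl dl0 near_q] : exists2 dl, 0 < dl & forall z,
    vnorm (vsub z q) < dl -> ((om q - e / 4)%:E < Om z)%E.
  by apply: Om_lsc; rewrite Om_fin // lte_fin; lra.
have [t1 t10 small1] := small_factor (vnorm (vsub x0 q)) dl0.
have [t2 t20 small2] := small_factor (om x0 - om q) e4.
set t := Num.min (1/2) (Num.min t1 t2).
have t_gt0 : 0 < t by rewrite !lt_min t10 t20 andbT; lra.
have t_half : t <= 1/2 by rewrite ge_min lexx.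
have t_le1 : t <= t1 by rewrite !ge_min lexx !orbT.
have t_le2 : t <= t2 by rewrite !ge_min lexx !orbT.
set xt := vcomb t x0 q.
have Ixt : rel_int A (Delta `&` A) xt.
  by apply: rel_int_simplex_vcomb; rewrite // t_gt0 /=; lra.
have [[Dxt _] _] := Ixt.
have subgrad z : Delta z -> dotp (g xt) (vsub z xt) <= om z - om xt.
  by move=> Dz; apply: rel_grad_subgrad => //; exact: g_grad.
exists (g xt); rewrite (fconj_subgrad Dxt subgrad) lee_fin.
have om_xt : om q - e / 4 < om xt.
  rewrite -lte_fin -Om_fin //; apply: near_q.
  by rewrite vcomb_subr vnormZ ger0_norm ?ltW // small1 // ltW.
have at_x0 := subgrad x0 Dx0; rewrite vcomb_subl dotpZr in at_x0.
have slope : dotp (g xt) xt - dotp (g xt) q = t * dotp (g xt) (vsub x0 q).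
  by rewrite -dotpBr vcomb_subr dotpZr.
have gap : t * (om x0 - om q) < e / 4 by rewrite small2 // (ltW t_gt0) t_le2.
have at_x0' := ler_wpM2l (ltW t_gt0) at_x0.
have te : t * e <= 1/2 * e := ler_wpM2r (ltW e0) t_half.
have : (1 - t) * (t * dotp (g xt) (vsub x0 q) - (om xt - om q + e)) <= 0 by lra.
rewrite pmulr_rle0; lra.
Qed.

End SimplexSupported.

Section DiagonalObjective.
Variables (R : realType) (Y : finType) (N : nat) (kappa : R) (gam : 'I_N -> vec R Y).
Hypothesis N_gt0 : (0 < N)%N.
Implicit Types (s : vec R Y) (q : 'I_N -> vec R Y) (b : 'I_N -> R).

Let N_neq0 : (N%:R : R) != 0.
Proof. by rewrite pnatr_eq0 -lt0n. Qed.

Lemma sum_dotp_vmean s q : \sum_i dotp s (q i) = N%:R * dotp s (vmean q).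
Proof.
rewrite /dotp /vmean exchange_big /= mulr_sumr; apply: eq_bigr => y _.
by rewrite mulrCA mulVKf // mulr_sumr.
Qed.

Definition Sbar_value b (bm : R) q :=
  N%:R^-1 * \sum_i dotp (gam i) (q i) + kappa / N%:R * (\sum_i b i - N%:R * bm).

Lemma Sbar_formulaE (f : vec R Y -> \bar R) b bm q :
  (forall i, f (q i) = (b i)%:E) -> f (vmean q) = bm%:E ->
  Sbar_formula kappa gam f q = (Sbar_value b bm q)%:E.
Proof.
by move=> fq fm; rewrite /Sbar_formula fm (eq_bigr _ (fun i _ => fq i)) sumEFin.
Qed.

Lemma SN_const_sum b bm s e q :
  N%:R^-1 * \sum_i (dotp (gam i) (q i)
    + kappa * (b i + (dotp s (vmean q) - bm + e) - dotp s (q i)))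
  = Sbar_value b bm q + kappa * e.
Proof.
rewrite /Sbar_value big_split /= -mulr_sumr !sumrB big_split /= sumr_const card_ord.
by rewrite sum_dotp_vmean -mulr_natl; field.
Qed.

Lemma SN_const_ge (f : vec R Y -> \bar R) b bm s e q : 0 <= kappa ->
  (forall i, f (q i) = (b i)%:E) ->
  ((dotp s (vmean q) - bm + e)%:E <= fconj f s)%E ->
  ((Sbar_value b bm q + kappa * e)%:E <= SN kappa gam f (fun=> s) q)%E.
Proof.
move=> k0 fq fs; rewrite -(SN_const_sum b bm s e q) /SN EFinM -sumEFin.
apply: lee_wpmul2l; first by rewrite lee_fin invr_ge0 ler0n.
apply: lee_sum => i _; rewrite /fy_loss fq EFinD; apply: leeD2l.
rewrite EFinM; apply: lee_wpmul2l; first by rewrite lee_fin.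
by rewrite !EFinB EFinD; apply: leeB => //; apply: leeD2l.
Qed.

Lemma SN_const_le (f : vec R Y -> \bar R) b bm s e q : 0 <= kappa ->
  (forall i, f (q i) = (b i)%:E) ->
  (fconj f s <= (dotp s (vmean q) - bm + e)%:E)%E ->
  (SN kappa gam f (fun=> s) q <= (Sbar_value b bm q + kappa * e)%:E)%E.
Proof.
move=> k0 fq fs; rewrite -(SN_const_sum b bm s e q) /SN EFinM -sumEFin.
apply: lee_wpmul2l; first by rewrite lee_fin invr_ge0 ler0n.
apply: lee_sum => i _; rewrite /fy_loss fq EFinD; apply: leeD2l.
rewrite EFinM; apply: lee_wpmul2l; first by rewrite lee_fin.
by rewrite !EFinB EFinD; apply: leeB => //; apply: leeD2l.
Qed.

Variable Om : vec R Y -> \bar R.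
Hypothesis kappa_gt0 : 0 < kappa.
Hypotheses (Om_proper : proper_fun Om) (Om_lsc : lsc_fun Om).
Hypotheses (Om_convex : convex_fun Om) (Om_dom : edom Om = simplex (Y := Y)).
Hypothesis Om_legendre : legendre_on (aff_hull (simplex (Y := Y))) Om.

Lemma Sbar_simplexE q : prod_simplex q ->
  Sbar kappa gam Om q = Sbar_formula kappa gam Om q.
Proof.
move=> Dq; have Dqm := vmean_simplex N_gt0 Dq.
have Omq i : Om (q i) = (fine (Om (q i)))%:E by exact: Om_fin.
rewrite (Sbar_formulaE Omq (Om_fin Om_proper Om_dom Dqm)).
apply/eqP; rewrite eq_le; apply/andP; split.
  apply/lee_addgt0Pr => e e0.
  have [s tight] := fconj_near_tight Om_proper Om_dom Om_convex Om_lsc Om_legendre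
    Dqm (divr_gt0 e0 kappa_gt0).
  apply: ereal_inf_le; exists (SN kappa gam Om (fun=> s) q); first by exists (fun=> s).
  have -> : e = kappa * (e / kappa) by rewrite mulrC divfK ?gt_eqF.
  by rewrite -EFinD; exact: SN_const_le (ltW kappa_gt0) Omq tight.
apply: le_ereal_inf_tmp => _ [s s_diag <-].
have -> : s = fun=> s (Ordinal N_gt0) by apply/funext => i; exact: s_diag.
rewrite -[X in X%:E]addr0 -(mulr0 kappa).
apply: SN_const_ge (ltW kappa_gt0) Omq _.
by rewrite addr0; exact: fenchel_young.
Qed.

End DiagonalObjective.

Section JensenGap.
Variables (R : realType) (Y : finType) (Psi : vec R Y -> \bar R).
Local Notation ps x := (fine (Psi x)).
Hypotheses (Psi_proper : forall x, Psi x != -oo%E) (Psi_convex : convex_fun Psi).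
Implicit Types (t : R) (u v x : vec R Y).

Lemma Psi_fin x : edom Psi x -> Psi x = (ps x)%:E.
Proof. by move=> x_fin; rewrite fineK // fin_numE Psi_proper lt_eqF. Qed.

Lemma edom_vcomb t u v : 0 < t < 1 -> edom Psi u -> edom Psi v ->
  edom Psi (vcomb t u v).
Proof.
move=> t01 Pu Pv; apply: le_lt_trans (Psi_convex u v t01) _.
by rewrite (Psi_fin Pu) (Psi_fin Pv) -!EFinM -EFinD ltey.
Qed.

Lemma fine_Psi_convex t u v : 0 < t < 1 -> edom Psi u -> edom Psi v ->
  ps (vcomb t u v) <= t * ps u + (1 - t) * ps v.
Proof.
move=> t01 Pu Pv; have := Psi_convex u v t01.
by rewrite (Psi_fin (edom_vcomb t01 Pu Pv)) (Psi_fin Pu) (Psi_fin Pv) -!EFinM -EFinD lee_fin.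
Qed.

Variables (N : nat) (kappa : R) (gam : 'I_N -> vec R Y).
Hypothesis N_gt0 : (0 < N)%N.
Implicit Types q : 'I_N -> vec R Y.

Definition linear_part q := N%:R^-1 * \sum_i dotp (gam i) (q i).
Definition jensen_gap q := N%:R^-1 * \sum_i ps (q i) - ps (vmean q).

Lemma edom_vmean q : prod_dom Psi q -> edom Psi (vmean q).
Proof.
move=> Pq; apply: (vmean_in (C := edom Psi)) N_gt0 Pq => t u v; exact: edom_vcomb.
Qed.

Lemma jensen_gap_ge0 q : prod_dom Psi q -> 0 <= jensen_gap q.
Proof.
move=> Pq; rewrite subr_ge0.
apply: (jensen_vmean (C := edom Psi) (f := fun x => ps x)) N_gt0 Pq => t u v.
- exact: edom_vcomb.
- exact: fine_Psi_convex.
Qed.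

Lemma FgapE q : prod_dom Psi q -> Fgap Psi q = (jensen_gap q)%:E.
Proof.
move=> Pq; rewrite /Fgap (Psi_fin (edom_vmean Pq)).
by under eq_bigr do rewrite Psi_fin //; rewrite sumEFin.
Qed.

Lemma Sbar_formula_gap q : prod_dom Psi q ->
  Sbar_formula kappa gam Psi q = (linear_part q + kappa * jensen_gap q)%:E.
Proof.
move=> Pq; rewrite (Sbar_formulaE _ _ (fun i => Psi_fin (Pq i)) (Psi_fin (edom_vmean Pq))).
rewrite /Sbar_value /linear_part /jensen_gap; congr (_%:E).
by field; rewrite pnatr_eq0 -lt0n.
Qed.

Lemma linear_part_vcombN t q q' :
  linear_part (vcombN t q q') = t * linear_part q + (1 - t) * linear_part q'.
Proof.
rewrite /linear_part /vcombN.
by under eq_bigr do rewrite dotp_vcomb; rewrite big_split /= -!mulr_sumr; ring.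
Qed.

Lemma Sbar_formula_convex (D : set ('I_N -> vec R Y)) : 0 <= kappa ->
  D `<=` prod_dom Psi -> convex_on D (Fgap Psi) ->
  convex_on D (Sbar_formula kappa gam Psi).
Proof.
move=> k0 DP gap_cvx q q' t Dq Dq' t01.
have [Pq Pq'] := (DP _ Dq, DP _ Dq').
have Pt : prod_dom Psi (vcombN t q q') by move=> i; exact: edom_vcomb.
have := gap_cvx q q' t Dq Dq' t01.
rewrite !Sbar_formula_gap // !FgapE //.
rewrite -!EFinM -!EFinD !lee_fin linear_part_vcombN => /(ler_wpM2l k0).
lra.
Qed.

End JensenGap.

Theorem lemma1 (R : realType) (d : nat) (Y : finType) (pt : Y -> 'rV[R]_d)
  (Xi : Type) (c : 'rV[R]_d -> Xi -> R) (N : nat) (xi : 'I_N -> Xi)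
  (kappa : R) (Omega : vec R Y -> \bar R) :
  injective pt -> no_cvx_comb pt -> (0 < N)%N -> 0 < kappa ->
  proper_fun Omega -> lsc_fun Omega -> convex_fun Omega ->
  edom Omega = simplex (Y := Y) ->
  legendre_on (aff_hull (simplex (Y := Y))) Omega ->
  let gam : 'I_N -> vec R Y := fun i y => c (pt y) (xi i) in
  (forall q, prod_simplex q -> Sbar kappa gam Omega q = Sbar_formula kappa gam Omega q) /\
  (forall Psi : vec R Y -> \bar R,
     legendre_on [set: vec R Y] Psi ->
     (forall q, Omega q = (Psi q + set_indic (simplex (Y := Y)) q)%E) ->
     [/\ (forall q, prod_simplex q ->
            Sbar kappa gam Omega q = Sbar_formula kappa gam Psi q),
         (forall D, D `<=` prod_dom Psi ->
            convex_on D (@Fgap R Y N Psi) -> convex_on D (Sbar_formula kappa gam Psi)) &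
         (forall q, prod_dom Psi q -> (0 <= @Fgap R Y N Psi q)%E)]).
Proof.
move=> _ _ N_gt0 kappa_gt0 Om_proper Om_lsc Om_convex Om_dom Om_legendre gam.
have Sbar_Om := Sbar_simplexE gam N_gt0 kappa_gt0 Om_proper Om_lsc Om_convex
  Om_dom Om_legendre.
split=> // Psi [[Psi_finite _] Psi_cvx _ _ _] Om_Psi.
have Psi_proper x : Psi x != -oo%E by exact: Psi_finite.
have Psi_convex : convex_fun Psi by move=> u v t; exact: Psi_cvx.
have Om_simplex z : simplex z -> Omega z = Psi z.
  by move=> Dz; rewrite Om_Psi /set_indic asboolT // adde0.
split.
- move=> q Dq; rewrite Sbar_Om // /Sbar_formula (Om_simplex _ (vmean_simplex N_gt0 Dq)).
  by congr (_ + _ * (_ - _))%E; apply: eq_bigr => i _; exact: Om_simplex.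
- move=> D; exact (Sbar_formula_convex Psi_proper Psi_convex gam N_gt0 (ltW kappa_gt0)).
- move=> q Pq; rewrite (FgapE Psi_proper Psi_convex N_gt0 Pq) lee_fin.
  exact (jensen_gap_ge0 Psi_proper Psi_convex N_gt0 Pq).
Qed.
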